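(* Let $A=KQ/I$ be a connected finite-dimensional quiver algebra of finite global dimension whose vertices are labelled $1,\dots,n$ so that the Cartan matrix $\phi_A$ is lower triangular. Let $\phi_A=\hat U_1 Q\hat U_2$ be a Bruhat decomposition of $\phi_A$. Then the Coxeter permutation $p_A$ of $A$ equals the row-permutation associated to the permutation matrix $Q$.
   Context: The Cartan matrix $\phi_A$ is the $n\times n$ integer matrix with entries $\phi_{i,j}=\dim_K e_jAe_i$ (the number of nonzero paths from $j$ to $i$ in a basis of paths). For finite global dimension, $\det\phi_A=\pm1$, and the Coxeter matrix is $C_A=-\phi_A^{T}\phi_A^{-1}$. A Bruhat decomposition of an invertible matrix $M$ (over $\mathbb{Q}$) is a factorisation $M=U_1PU_2$ with $U_1,U_2$ invertible upper triangular and $P$ a permutation matrix; $P$ is uniquely determined by $M$. For a permutation matrix $P$, the row-permutation $p_r$ is given by $p_r(i)=j$ if the nonzero entry of row $i$ of $P$ is in column $j$; the column-permutation $p_c$ is given by $p_c(i)=j$ if the nonzero entry of column $i$ is in row $j$. The Coxeter permutation $p_A$ is the column-permutation of the permutation matrix $P$ in a Bruhat decomposition $C_A=U_1PU_2$. *)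

From HB Require Import structures.
From mathcomp Require Import all_boot all_order all_algebra all_fingroup.
Set Implicit Arguments. Unset Strict Implicit. Unset Printing Implicit Defensive.
Import Order.TTheory GRing.Theory Num.Theory.
Local Open Scope ring_scope.

(* A Cartan matrix phi : 'M[nat]_n, phi i j = dim_K e_j A e_i, viewed over Q. *)
Definition cartanQ (n : nat) (phi : 'M[nat]_n) : 'M[rat]_n :=
  map_mx (fun k : nat => k%:R) phi.

Definition lower_tri_nat (n : nat) (phi : 'M[nat]_n) : Prop :=
  forall i j : 'I_n, (i < j)%N -> phi i j = 0%N.

Definition coxeter (n : nat) (phi : 'M[nat]_n) : 'M[rat]_n :=
  - ((cartanQ phi)^T *m invmx (cartanQ phi)).

Definition upper_tri (n : nat) (U : 'M[rat]_n) : Prop :=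
  forall i j : 'I_n, (j < i)%N -> U i j = 0.

Definition bruhat_decomp (n : nat) (M U1 P U2 : 'M[rat]_n) : Prop :=
  [/\ upper_tri U1 /\ U1 \in unitmx, upper_tri U2 /\ U2 \in unitmx,
      is_perm_mx P & M = U1 *m P *m U2].

Definition is_row_perm (n : nat) (P : 'M[rat]_n) (p : 'S_n) : Prop :=
  forall i j : 'I_n, (P i j != 0) = (p i == j).

Definition is_col_perm (n : nat) (P : 'M[rat]_n) (p : 'S_n) : Prop :=
  forall i j : 'I_n, (P j i != 0) = (p i == j).

From HB Require Import structures.
From mathcomp Require Import all_boot all_order all_algebra all_fingroup.
Set Implicit Arguments. Unset Strict Implicit. Unset Printing Implicit Defensive.
Import Order.TTheory GRing.Theory Num.Theory.
Local Open Scope ring_scope.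

(* The Bruhat permutation of M is determined by the ranks of the lower-left
   submatrices of M (rows >= i, columns <= j): these ranks are unchanged by
   multiplication on either side by invertible upper triangular matrices, and
   for a permutation matrix they count the points of the permutation in a
   quadrant, which recovers the permutation.  As phi_A is lower triangular,
   phi_A^T is upper triangular, so C_A = - phi_A^T phi_A^-1 has the same ranks
   as phi_A^-1 = U2^-1 Q^-1 U1^-1, i.e. as Q^-1.  Hence the permutation matrix
   of the Bruhat decomposition of C_A is Q^-1, whose column permutation is the
   row permutation of Q. *)

Section PredMx.
Variables (F : fieldType) (n : nat).

Definition pred_mx (P : pred 'I_n) : 'M[F]_n := diag_mx (\row_k (P k)%:R).

Lemma pred_mxE P a b : pred_mx P a b = ((a == b) && P a)%:R.
Proof. by rewrite !mxE; case: (P a); case: (a == b); rewrite ?mulr1n ?mulr0n. Qed.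

Lemma pred_mxMl P (M : 'M[F]_n) a b : (pred_mx P *m M) a b = (P a)%:R * M a b.
Proof. by rewrite mul_diag_mx !mxE. Qed.

Lemma pred_mxMr P (M : 'M[F]_n) a b : (M *m pred_mx P) a b = M a b * (P b)%:R.
Proof. by rewrite mul_mx_diag !mxE. Qed.

Lemma pred_mxM P Q : pred_mx P *m pred_mx Q = pred_mx [pred k | P k && Q k].
Proof.
apply/matrixP=> a b; rewrite pred_mxMl !pred_mxE /=.
by case: (P a); case: (Q a); case: (a == b); rewrite ?mul1r ?mul0r ?andbF.
Qed.

Lemma pred_mx_idem P : pred_mx P *m pred_mx P = pred_mx P.
Proof. by rewrite pred_mxM; apply/matrixP=> a b; rewrite !pred_mxE /= andbb. Qed.

Lemma pred_mxC P : 1%:M - pred_mx P = pred_mx (predC P).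
Proof.
apply/matrixP=> a b; rewrite mxE [(- pred_mx P) a b]mxE [1%:M a b]mxE !pred_mxE /=.
by case: (P a); case: (a == b); rewrite /= ?subrr ?subr0.
Qed.

Lemma rank_pred_mx_le P : (\rank (pred_mx P) <= #|P|)%N.
Proof.
have -> : pred_mx P = \sum_(k | P k) delta_mx k k.
  apply/matrixP=> a b; rewrite pred_mxE summxE.
  have [Pa|nPa] := boolP (P a).
    rewrite andbT (bigD1 a) //= big1 ?addr0 => [|k /andP[_ ka]]; rewrite mxE.
      by rewrite eqxx eq_sym.
    by rewrite eq_sym (negbTE ka).
  rewrite andbF big1 // => k Pk; rewrite mxE.
  by case: eqP => // ak; rewrite ak Pk in nPa.
rewrite -sum1_card; apply: (big_ind2 (fun M r => \rank M <= r)%N).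
- by rewrite mxrank0.
- by move=> ? ? ? ? h1 h2; apply: leq_trans (mxrank_add _ _) (leq_add h1 h2).
- by move=> k _; rewrite mxrank_delta.
Qed.

Lemma rank_pred_mx P : \rank (pred_mx P) = #|P|.
Proof.
apply/eqP; rewrite eqn_leq rank_pred_mx_le /= -(leq_add2r #|predC P|) cardC card_ord.
rewrite -[X in (X <= _)%N](mxrank1 F n).
rewrite -(subrK (pred_mx P) 1%:M) pred_mxC addrC.
by apply: leq_trans (mxrank_add _ _) _; rewrite leq_add2l rank_pred_mx_le.
Qed.

Lemma rank_pred_mx_perm_mx P Q (s : 'S_n) :
  \rank (pred_mx P *m perm_mx s *m pred_mx Q) = #|[pred a | P a && Q (s a)]|.
Proof.
have conj_pred : perm_mx s *m pred_mx Q *m perm_mx s^-1 = pred_mx [pred a | Q (s a)].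
  rewrite -row_permE -col_permE; apply/matrixP=> a b; rewrite 2!mxE !pred_mxE /=.
  by rewrite (inj_eq perm_inj).
rewrite -(@mxrankMfree F n n n _ (perm_mx s^-1)); last by rewrite row_free_unit unitmx_perm.
by rewrite -!mulmxA (mulmxA (perm_mx s)) conj_pred pred_mxM rank_pred_mx.
Qed.

End PredMx.

Arguments pred_mx {F n} P.

Lemma mulmx1_invmx (R : comUnitRingType) n (A B : 'M[R]_n) :
  A *m B = 1%:M -> invmx B = A.
Proof.
move=> AB1; have [_ B_unit] := mulmx1_unit AB1.
by rewrite -[LHS]mul1mx -AB1 mulmxK.
Qed.

Section PermMx.
Variable n : nat.
Implicit Types s t : 'S_n.

Lemma is_row_perm_perm_mx s : is_row_perm (perm_mx s) s.
Proof. by move=> i j; rewrite !mxE pnatr_eq0 eqb0 negbK. Qed.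

Lemma is_col_perm_perm_mx s : is_col_perm (perm_mx s) s^-1.
Proof. by move=> i j; rewrite is_row_perm_perm_mx (canF_eq (permKV s)) eq_sym. Qed.

Lemma is_col_perm_uniq (P : 'M[rat]_n) s t :
  is_col_perm P s -> is_col_perm P t -> s = t.
Proof. by move=> Ps Pt; apply/permP=> i; apply/eqP; rewrite eq_sym -Pt Ps. Qed.

End PermMx.

Section BruhatRank.
Variables (F : fieldType) (n : nat).

Definition bruhat_rank (M : 'M[F]_n) (i j : nat) : nat :=
  \rank (pred_mx (fun k : 'I_n => (i <= k)%N) *m M *m pred_mx (fun k : 'I_n => (k <= j)%N)).

Lemma bruhat_rank_opp M i j : bruhat_rank (- M) i j = bruhat_rank M i j.
Proof. by rewrite /bruhat_rank mulmxN mulNmx mxrank_opp. Qed.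

Lemma bruhat_rank_perm_mx (s : 'S_n) i j :
  bruhat_rank (perm_mx s) i j = #|[pred a : 'I_n | (i <= a)%N && (s a <= j)%N]|.
Proof. exact: rank_pred_mx_perm_mx. Qed.

Lemma bruhat_rank_perm_mx_inj (s t : 'S_n) :
  bruhat_rank (perm_mx s) =2 bruhat_rank (perm_mx t) -> s = t.
Proof.
move=> eq_rank; apply/permP => a.
have count_split (u : 'S_n) j : bruhat_rank (perm_mx u) a j =
    ((u a <= j) + bruhat_rank (perm_mx u) a.+1 j)%N.
  rewrite !bruhat_rank_perm_mx (cardD1 a) inE leqnn /=; congr (_ + _)%N.
  apply: eq_card => x; rewrite !inE /= ltn_neqAle.
  by case: (x =P a) => [->|/eqP xa]; rewrite ?eqxx // eq_sym (inj_eq val_inj) xa.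
have le_sa_t j : (s a <= j)%N = (t a <= j)%N.
  move: (eq_rank a j); rewrite !count_split eq_rank.
  by case: (s a <= j)%N; case: (t a <= j)%N => // /eqP; rewrite eqn_add2r.
by apply/val_inj/eqP; rewrite eqn_leq le_sa_t leqnn -le_sa_t leqnn.
Qed.

End BruhatRank.

Section UpperTriangular.
Variable n : nat.
Implicit Types U M : 'M[rat]_n.

Lemma upper_tri_unitmxP U :
  upper_tri U -> reflect (forall k, U k k != 0) (U \in unitmx).
Proof.
move=> U_upper; rewrite unitmxE unitfE -det_tr det_trig.
  by apply: (iffP (prodf_neq0 _ _)) => h k => [|_]; [have := h k isT|]; rewrite mxE.
by apply/is_trig_mxP => a b ab; rewrite mxE U_upper.
Qed.

Lemma unitmx_upper_tri_patch U (W : 'M[rat]_n) (c : 'I_n -> 'I_n -> bool) :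
  upper_tri U -> U \in unitmx ->
  (forall a b, W a b = if c a b then U a b else (a == b)%:R) -> W \in unitmx.
Proof.
move=> U_upper /(upper_tri_unitmxP U_upper) U_diag W_patch.
have W_upper : upper_tri W.
  move=> a b ba; rewrite W_patch; case: (c a b); first exact: U_upper.
  by case: eqP => // ab; rewrite ab ltnn in ba.
apply/(upper_tri_unitmxP W_upper) => k; rewrite W_patch eqxx.
by case: (c k k); rewrite ?U_diag ?mulr1n ?oner_eq0.
Qed.

(* E U agrees with the invertible W := E U + (1 - E) on the rows kept by E,
   so that E (U M) = W (E M). *)
Lemma bruhat_rank_mulUl U M i j :
  upper_tri U -> U \in unitmx -> bruhat_rank (U *m M) i j = bruhat_rank M i j.
Proof.
move=> U_upper U_unit; rewrite /bruhat_rank.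
set E := pred_mx (fun k : 'I_n => (i <= k)%N).
have EUE : E *m U *m E = E *m U.
  apply/matrixP=> a b; rewrite pred_mxMr pred_mxMl.
  case: (leqP i b) => ib; first by rewrite mulr1.
  case: (leqP i a) => ia; last by rewrite !mul0r.
  by rewrite U_upper ?mulr0 // (leq_trans ib ia).
set W := E *m U + (1%:M - E).
have W_unit : W \in unitmx.
  apply: (unitmx_upper_tri_patch (c := fun a _ => (i <= a)%N) U_upper U_unit) => a b.
  rewrite /W /E pred_mxC [_ a b]mxE pred_mxMl pred_mxE /=.
  by case: (i <= a)%N; rewrite /= ?mul1r ?mul0r ?andbT ?andbF ?subrr ?addr0 ?subr0 ?add0r.
have WE : W *m E = E *m U.
  by rewrite mulmxDl mulmxBl mul1mx EUE pred_mx_idem subrr addr0.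
by rewrite !mulmxA -WE -!mulmxA eqmxMfull ?row_full_unit // !mulmxA.
Qed.

Lemma bruhat_rank_mulUr U M i j :
  upper_tri U -> U \in unitmx -> bruhat_rank (M *m U) i j = bruhat_rank M i j.
Proof.
move=> U_upper U_unit; rewrite /bruhat_rank.
set E := pred_mx (fun k : 'I_n => (k <= j)%N).
have EUE : E *m (U *m E) = U *m E.
  apply/matrixP=> a b; rewrite pred_mxMl pred_mxMr.
  case: (leqP b j) => bj; last by rewrite !mulr0.
  case: (leqP a j) => aj; first by rewrite mul1r.
  by rewrite U_upper ?mulr0 ?mul0r // (leq_ltn_trans bj aj).
set W := U *m E + (1%:M - E).
have W_unit : W \in unitmx.
  apply: (unitmx_upper_tri_patch (c := fun _ b => (b <= j)%N) U_upper U_unit) => a b.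
  rewrite /W /E pred_mxC [_ a b]mxE pred_mxMr pred_mxE /=.
  by case: (a =P b) => [->|_]; case: (b <= j)%N; rewrite /= ?mulr1 ?mulr0 ?addr0 ?add0r.
have EW : E *m W = U *m E.
  by rewrite mulmxDr mulmxBr mulmx1 EUE pred_mx_idem subrr addr0.
by rewrite -!mulmxA -EW !mulmxA mxrankMfree ?row_free_unit.
Qed.

Lemma bruhat_rank_invUl U M i j :
  upper_tri U -> U \in unitmx -> bruhat_rank (invmx U *m M) i j = bruhat_rank M i j.
Proof. by move=> U_upper U_unit; rewrite -(bruhat_rank_mulUl _ _ _ U_upper) ?mulKVmx. Qed.

Lemma bruhat_rank_invUr U M i j :
  upper_tri U -> U \in unitmx -> bruhat_rank (M *m invmx U) i j = bruhat_rank M i j.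
Proof. by move=> U_upper U_unit; rewrite -(bruhat_rank_mulUr _ _ _ U_upper) ?mulmxKV. Qed.

End UpperTriangular.

Theorem mainTheorem3 (n : nat) (phi : 'M[nat]_n)
  (hlow : lower_tri_nat phi)
  (hdet : \det (cartanQ phi) = 1 \/ \det (cartanQ phi) = -1)
  (U1 Q U2 : 'M[rat]_n) (hQ : bruhat_decomp (cartanQ phi) U1 Q U2)
  (V1 P V2 : 'M[rat]_n) (hP : bruhat_decomp (coxeter phi) V1 P V2)
  (pA : 'S_n) (hpA : is_col_perm P pA) :
  is_row_perm Q pA.
Proof.
case: hQ => [[U1_upper U1_unit] [U2_upper U2_unit] /is_perm_mxP[q ->] eC].
case: hP => [[V1_upper V1_unit] [V2_upper V2_unit] /is_perm_mxP[p eP] eX].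
set C := cartanQ phi in hdet eC.
have CT_upper : upper_tri C^T by move=> a b ba; rewrite !mxE hlow.
have CT_unit : C^T \in unitmx.
  by rewrite unitmx_tr unitmxE unitfE; case: hdet => ->; rewrite ?oppr_eq0 oner_eq0.
have invC : invmx C = invmx U2 *m perm_mx q^-1 *m invmx U1.
  apply: mulmx1_invmx; rewrite eC !mulmxA (mulmxKV U1_unit) -(mulmxA _ (perm_mx q^-1)).
  by rewrite -perm_mxM mulVg perm_mx1 mulmx1 mulVmx.
have rank_coxeter : bruhat_rank (coxeter phi) =2 bruhat_rank (perm_mx q^-1 : 'M[rat]_n).
  move=> i j; rewrite /coxeter -/C bruhat_rank_opp bruhat_rank_mulUl // invC.
  by rewrite bruhat_rank_invUr // bruhat_rank_invUl.
have p_eq : p = q^-1%g.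
  apply: (@bruhat_rank_perm_mx_inj rat) => i j.
  by rewrite -rank_coxeter eX eP bruhat_rank_mulUr // bruhat_rank_mulUl.
rewrite eP in hpA.
rewrite (is_col_perm_uniq hpA (is_col_perm_perm_mx p)) p_eq invgK.
exact: is_row_perm_perm_mx.
Qed.
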